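(* Let $X=X_\Sigma$ be the projective toric manifold described in the context. If $\mathrm{ch}_2(X)$ is nef, then $p_3=1$.
   Context: Let $N=\mathbb{Z}^d$ and let $\Sigma$ be a smooth projective complete fan in $N_\mathbb{R}$ whose set of primitive ray generators is $\{v_1,\dots,v_{p_0},y_1,\dots,y_{p_1},z_1,\dots,z_{p_2},t_1,\dots,t_{p_3},u_1,\dots,u_{p_4}\}$, where $p_0,\dots,p_4$ are positive integers with $p_0+p_1+p_2+p_3+p_4-3=d$. A primitive collection is a set of ray generators not generating a cone of $\Sigma$ while every proper subset does. The primitive collections of $\Sigma$ are exactly $\{v_i\}\cup\{y_j\}$, $\{y_j\}\cup\{z_j\}$, $\{z_j\}\cup\{t_j\}$, $\{t_j\}\cup\{u_j\}$, $\{u_j\}\cup\{v_j\}$ (all elements of the indicated groups), with primitive relations $v_1+\cdots+v_{p_0}+y_1+\cdots+y_{p_1}=c_2z_2+\cdots+c_{p_2}z_{p_2}+(b_1+1)t_1+\cdots+(b_{p_3}+1)t_{p_3}$, $y_1+\cdots+y_{p_1}+z_1+\cdots+z_{p_2}=u_1+\cdots+u_{p_4}$, $z_1+\cdots+z_{p_2}+t_1+\cdots+t_{p_3}=0$, $t_1+\cdots+t_{p_3}+u_1+\cdots+u_{p_4}=y_1+\cdots+y_{p_1}$, $u_1+\cdots+u_{p_4}+v_1+\cdots+v_{p_0}=c_2z_2+\cdots+c_{p_2}z_{p_2}+b_1t_1+\cdots+b_{p_3}t_{p_3}$, with $b_i,c_j\in\mathbb{Z}_{\ge0}$, and $c_2=\min_j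 c_j$, $b_1=\min_i b_i$. $X=X_\Sigma$. With $D_1,\dots,D_n$ the torus invariant prime divisors, $\mathrm{ch}_2(X)=\frac12\sum D_i^2$, and $\mathrm{ch}_2(X)$ is nef if $(\mathrm{ch}_2(X)\cdot S)\ge0$ for every 2-dimensional torus invariant irreducible closed subvariety $S\subset X$. *)

From HB Require Import structures.
From mathcomp Require Import all_boot all_order all_algebra.
Set Implicit Arguments. Unset Strict Implicit. Unset Printing Implicit Defensive.
Import Order.TTheory GRing.Theory Num.Theory.

(* Index type of the ray generators: group k (k = 0..4 for v,y,z,t,u) *)
(* has p_k members, indexed 0..p_k-1.                                   *)
Definition psz (p0 p1 p2 p3 p4 : nat) (k : 'I_5) : nat :=
  nth 0%N [:: p0; p1; p2; p3; p4] k.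

Definition ray (p0 p1 p2 p3 p4 : nat) : finType :=
  {k : 'I_5 & 'I_(psz p0 p1 p2 p3 p4 k)}.

Definition grp p0 p1 p2 p3 p4 (k : 'I_5) : {set ray p0 p1 p2 p3 p4} :=
  [set r | tag r == k].
Definition idx p0 p1 p2 p3 p4 (r : ray p0 p1 p2 p3 p4) : nat := nat_of_ord (tagged r).

Definition dimN (p0 p1 p2 p3 p4 : nat) : nat := (p0 + p1 + p2 + p3 + p4 - 3)%N.

(* Generic notions for a simplicial fan given by a finite set R of     *)
(* rays with generators vec : R -> Z^d and its set of cones (each cone *)
(* is represented by the set of its ray generators).                   *)
Local Open Scope ring_scope.

Definition vecQ (R : finType) (d : nat) (vec : R -> 'rV[int]_d) (i : R) : 'rV[rat]_d :=
  map_mx (intr : int -> rat) (vec i).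

Definition in_cone (R : finType) (d : nat) (vec : R -> 'rV[int]_d) (S : {set R})
  (x : 'rV[rat]_d) : Prop :=
  exists a : R -> rat, (forall i, 0 <= a i) /\ x = \sum_(i in S) a i *: vecQ vec i.

Definition is_fan (R : finType) (d : nat) (vec : R -> 'rV[int]_d) (cones : {set {set R}}) : Prop :=
  [/\
      forall i, [set i] \in cones,
      forall S T : {set R}, S \in cones -> T \subset S -> T \in cones,
      forall S : {set R}, S \in cones -> forall a : R -> rat,
        \sum_(i in S) a i *: vecQ vec i = 0 -> forall i, i \in S -> a i = 0
    &
      forall (S T : {set R}) x, S \in cones -> T \in cones ->
        in_cone vec S x -> in_cone vec T x -> in_cone vec (S :&: T) x].

(* smooth: the generators of each cone are part of a Z-basis of N *)
Definition is_smooth (R : finType) (d : nat) (vec : R -> 'rV[int]_d) (cones : {set {set R}}) : Prop :=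
  forall S : {set R}, S \in cones -> forall x : 'rV[int]_d,
    (exists a : R -> rat, map_mx (intr : int -> rat) x = \sum_(i in S) a i *: vecQ vec i) ->
    exists a : R -> int, x = \sum_(i in S) a i *: vec i.

(* complete: the support of the fan is all of N_R (equivalently, as the cones are
   rational polyhedral, all of Q^d) *)
Definition is_complete (R : finType) (d : nat) (vec : R -> 'rV[int]_d) (cones : {set {set R}}) : Prop :=
  forall x : 'rV[rat]_d, exists2 S, S \in cones & in_cone vec S x.

(* projective: there is a strictly convex piecewise-linear support function,
   i.e. values phi on the rays such that for every maximal cone S the linear
   function m_S agreeing with phi on S is strictly below phi off S. *)
Definition is_projective (R : finType) (d : nat) (vec : R -> 'rV[int]_d) (cones : {set {set R}}) : Prop :=
  exists phi : R -> rat, forall S : {set R}, S \in cones -> #|S| = d ->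
    exists m : 'cV[rat]_d,
      (forall i, i \in S -> (vecQ vec i *m m) 0 0 = phi i) /\
      (forall j, j \notin S -> (vecQ vec j *m m) 0 0 < phi j).

Definition smooth_projective_complete_fan (R : finType) (d : nat) (vec : R -> 'rV[int]_d)
  (cones : {set {set R}}) : Prop :=
  [/\ is_fan vec cones, is_smooth vec cones, is_complete vec cones & is_projective vec cones].

Definition primitive_collection (R : finType) (cones : {set {set R}}) (P : {set R}) : Prop :=
  P \notin cones /\ forall Q : {set R}, Q \proper P -> Q \in cones.

(* Intersection theory on X_Sigma: monomials in the classes x_i = [D_i] *)
(* are exponent vectors mu : R -> nat; deg mu is the degree of the      *)
(* product of the D_i^(mu i) when sum mu = d. It is characterized (for  *)
(* a smooth complete fan) by the Stanley-Reisner presentation of the    *)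
(* Chow ring A(X)_Q = Q[x_i]/(I_SR + J) and deg(point) = 1.             *)
Definition mdeg (R : finType) (mu : {ffun R -> nat}) : nat := (\sum_i mu i)%N.

Definition bump (R : finType) (mu : {ffun R -> nat}) (i : R) : {ffun R -> nat} :=
  [ffun j => (mu j + (j == i))%N].

Definition intersection_form (R : finType) (d : nat) (vec : R -> 'rV[int]_d)
  (cones : {set {set R}}) (deg : {ffun R -> nat} -> rat) : Prop :=
  [/\
      forall mu, mdeg mu = d -> [set i | (0 < mu i)%N] \notin cones -> deg mu = 0,
      (* a maximal cone gives a point, of degree 1 (smoothness) *)
      forall S : {set R}, S \in cones -> #|S| = d -> deg [ffun i => nat_of_bool (i \in S)] = 1
    &
      forall mu, mdeg mu = d.-1 -> forall k : 'I_d,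
        \sum_i (vec i 0 k)%:~R * deg (bump mu i) = 0].

(* (ch_2(X) . V(tau)) = 1/2 sum_i (D_i^2 . V(tau)), with [V(tau)] = prod_{i in tau} x_i *)
Definition ch2_dot (R : finType) (deg : {ffun R -> nat} -> rat) (tau : {set R}) : rat :=
  2^-1 * \sum_i deg [ffun j => (nat_of_bool (j \in tau) + (nat_of_bool (j == i)).*2)%N].

(* ch_2(X) nef: nonnegative on every torus-invariant surface V(tau), dim tau = d-2 *)
Definition ch2_nef (R : finType) (d : nat) (cones : {set {set R}})
  (deg : {ffun R -> nat} -> rat) : Prop :=
  forall tau : {set R}, tau \in cones -> #|tau| = (d - 2)%N -> 0 <= ch2_dot deg tau.

Definition gsum p0 p1 p2 p3 p4 d (vec : ray p0 p1 p2 p3 p4 -> 'rV[int]_d) (k : 'I_5)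
  : 'rV[int]_d := \sum_(r in grp p0 p1 p2 p3 p4 k) vec r.

(* c_2 z_2 + ... + c_{p2} z_{p2}; with 0-based indices, z_j (j>=1) has coefficient c j *)
Definition zterm p0 p1 p2 p3 p4 d (c : nat -> nat) (vec : ray p0 p1 p2 p3 p4 -> 'rV[int]_d)
  : 'rV[int]_d :=
  \sum_(r in grp p0 p1 p2 p3 p4 2) vec r *+ (if idx r == 0%N then 0%N else c (idx r)).

(* sum_i (b_i + s) t_i, with 0-based indices: t_i has coefficient b i + s *)
Definition tterm p0 p1 p2 p3 p4 d (b : nat -> nat) (s : nat)
  (vec : ray p0 p1 p2 p3 p4 -> 'rV[int]_d) : 'rV[int]_d :=
  \sum_(r in grp p0 p1 p2 p3 p4 3) vec r *+ (b (idx r) + s)%N.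

Definition primitive_relations p0 p1 p2 p3 p4 d (b c : nat -> nat)
  (vec : ray p0 p1 p2 p3 p4 -> 'rV[int]_d) : Prop :=
  let G := gsum vec in
  [/\ G 0 + G 1 = zterm c vec + tterm b 1 vec,
      G 1 + G 2 = G 4,
      G 2 + G 3 = 0,
      G 3 + G 4 = G 1
    & G 4 + G 0 = zterm c vec + tterm b 0 vec].

Definition the_primitive_collections p0 p1 p2 p3 p4 : seq {set ray p0 p1 p2 p3 p4} :=
  let G := grp p0 p1 p2 p3 p4 in
  [:: G 0 :|: G 1; G 1 :|: G 2; G 2 :|: G 3; G 3 :|: G 4; G 4 :|: G 0].

From Pilot Require Import Defs.
From HB Require Import structures.
From mathcomp Require Import all_boot all_order all_algebra.
From mathcomp Require Import zify ring lra.
Import Order.TTheory GRing.Theory Num.Theory.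
Set Implicit Arguments. Unset Strict Implicit. Unset Printing Implicit Defensive.

(* ch2(X) is in fact never nef for these fans, whatever p3 is. Let S = V(tau) with tau the
   complement of five rays O. For distinct i, j in O the number D_i.D_j.S is 1 or 0 according
   as tau + {i, j} is a cone or not, and for fixed i the map r |-> D_i.D_r.S is a linear relation
   among the rays. A relation is determined by its values off a maximal cone, so matching it
   at three rays of O against a combination of the primitive relations rho1, rho2, rho3 of
   {v,y}, {y,z}, {z,t} gives D_i.D_j.S = B(rho i, rho j) for an explicit symmetric bilinear
   form B, whence 2 ch2.S = sum_r B(rho r, rho r). Every diagonal term is <= 0 except the one
   at z0, which is outweighed by the one at t0, for
   - O = {v0, y0, z0, t0, u0} (a pentagon) when b 0 <= 2 c j for all j >= 1, and
   - O = {v0, y0, z0, z1, u0} (a quadrilateral, u0 meeting S trivially) when 2 c 1 < b 0.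
   Indices are 0-based: z0, z1, t0 are the paper's z_1, z_2, t_1, and b 0, c 1 its b_1, c_2. *)

Local Open Scope ring_scope.

Lemma sumr_lt0_pair (R : numDomainType) (I : finType) (F : I -> R) (x y : I) :
  x != y -> F x + F y < 0 -> (forall i, i != x -> i != y -> F i <= 0) ->
  \sum_i F i < 0.
Proof.
move=> neq_xy Fxy F_le0; rewrite (bigD1 x) // (bigD1 y) 1?eq_sym //= addrA.
have rest_le0 : \sum_(i | (i != x) && (i != y)) F i <= 0.
  by apply: sumr_le0 => i /andP[ix iy]; exact: F_le0.
by rewrite -[ltRHS](addr0 0) ltr_leD.
Qed.

Lemma set5_ind (T : finType) (x1 x2 x3 x4 x5 : T) (P : T -> Prop) :
  P x1 -> P x2 -> P x3 -> P x4 -> P x5 -> {in [set x1; x2; x3; x4; x5], forall r, P r}.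
Proof. by move=> P1 P2 P3 P4 P5 r; rewrite !inE => /orP[/orP[/orP[/orP[]|]|]|] /eqP->. Qed.

Section SurfaceIntersection.

Variables (R : finType) (d : nat) (vec : R -> 'rV[int]_d).
Variables (cones : {set {set R}}) (deg : {ffun R -> nat} -> rat).
Hypothesis fan : is_fan vec cones.
Hypothesis deg_form : intersection_form vec cones deg.

Definition lcomb (a : R -> rat) : 'rV[rat]_d := \sum_r a r *: vecQ vec r.

Definition is_relation (a : R -> rat) := lcomb a = 0.

Lemma lcombD (a a' : R -> rat) : lcomb (a \+ a') = lcomb a + lcomb a'.
Proof. by rewrite /lcomb -big_split; apply: eq_bigr => r _; rewrite scalerDl. Qed.

Lemma lcombB (a a' : R -> rat) : lcomb (a \- a') = lcomb a - lcomb a'.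
Proof. by rewrite /lcomb -sumrB; apply: eq_bigr => r _; rewrite scalerBl. Qed.

Lemma eq_lcomb (a a' : R -> rat) : a =1 a' -> lcomb a = lcomb a'.
Proof. by move=> eq_a; apply: eq_bigr => r _; rewrite eq_a. Qed.

Lemma eq_relation (a a' : R -> rat) : a =1 a' -> is_relation a -> is_relation a'.
Proof. by move=> /eq_lcomb; rewrite /is_relation => ->. Qed.

Lemma relation_eq_off_cone (S : {set R}) (a a' : R -> rat) :
  S \in cones -> is_relation a -> is_relation a' -> {in ~: S, a =1 a'} -> a =1 a'.
Proof.
case: fan => _ _ free _ coneS rel_a rel_a' eq_off r.
have [rS | /negbTE rS] := boolP (r \in S); last by apply: eq_off; rewrite inE rS.
have rel_diff : lcomb (a \- a') = 0 by rewrite lcombB rel_a rel_a' subrr.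
apply/eqP; rewrite -subr_eq0; apply/eqP; apply: (free _ coneS (fun i => a i - a' i) _ _ rS).
rewrite /lcomb (bigID (mem S)) /= [X in _ + X]big1 ?addr0 // in rel_diff.
by move=> i iS; rewrite eq_off ?inE // subrr scale0r.
Qed.

Definition monomial (S : {set R}) : {ffun R -> nat} := [ffun r => nat_of_bool (r \in S)].

(* [inter tau i j] is the intersection number D_i.D_j.V(tau). *)
Definition inter (tau : {set R}) (i j : R) : rat := deg (Defs.bump (Defs.bump (monomial tau) i) j).

Lemma mdeg_monomial (S : {set R}) : mdeg (monomial S) = #|S|.
Proof.
rewrite /mdeg -sum1_card [RHS]big_mkcond /=; apply: eq_bigr => r _.
by rewrite ffunE; case: (r \in S).
Qed.

Lemma mdeg_bump (mu : {ffun R -> nat}) (i : R) : mdeg (Defs.bump mu i) = (mdeg mu).+1.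
Proof.
rewrite /mdeg /Defs.bump (eq_bigr _ (fun r _ => ffunE _ r)) big_split /= -addn1.
by congr (_ + _)%N; rewrite (bigD1 i) //= eqxx big1 // => r /negbTE ->.
Qed.

Lemma interC (tau : {set R}) (i j : R) : inter tau i j = inter tau j i.
Proof. by rewrite /inter; congr deg; apply/ffunP => r; rewrite !ffunE addnAC. Qed.

Lemma inter_relation (tau : {set R}) (i : R) :
  (#|tau| + 2 = d)%N -> is_relation (inter tau i).
Proof.
case: deg_form => _ _ lin card_tau.
have deg_bump : mdeg (Defs.bump (monomial tau) i) = d.-1.
  by rewrite mdeg_bump mdeg_monomial -card_tau addn2.
apply/rowP => k; rewrite /lcomb summxE mxE -[RHS](lin _ deg_bump k).
by apply: eq_bigr => r _; rewrite !mxE mulrC.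
Qed.

Lemma inter_noncone (tau : {set R}) (i j : R) :
  (#|tau| + 2 = d)%N -> tau :|: [set i; j] \notin cones -> inter tau i j = 0.
Proof.
case: deg_form => SR _ _ card_tau ncone_ij; apply: SR.
  by rewrite !mdeg_bump mdeg_monomial -card_tau addn2.
suff -> : [set r | (0 < Defs.bump (Defs.bump (monomial tau) i) j r)%N] = tau :|: [set i; j] by [].
by apply/setP => r; rewrite !inE !ffunE; case: (r \in tau); case: (r == i); case: (r == j).
Qed.

Lemma inter_cone (tau : {set R}) (i j : R) :
  (#|tau| + 2 = d)%N -> i != j -> i \notin tau -> j \notin tau ->
  tau :|: [set i; j] \in cones -> inter tau i j = 1.
Proof.
case: deg_form => _ point _ card_tau neq_ij i_tau j_tau cone_ij.
have monomial_ij : Defs.bump (Defs.bump (monomial tau) i) j = monomial (tau :|: [set i; j]).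
  apply/ffunP => r; rewrite !ffunE !inE.
  have [->|_] := eqVneq r i; first by rewrite (negbTE i_tau) (negbTE neq_ij).
  have [->|_] := eqVneq r j; first by rewrite (negbTE j_tau).
  by rewrite !addn0 !orbF.
rewrite /inter monomial_ij; apply: (point _ cone_ij).
rewrite cardsU cards2 neq_ij -card_tau; suff -> : tau :&: [set i; j] = set0 by rewrite cards0 subn0.
apply/setP => r; rewrite !inE; apply/andP => -[r_tau /orP[]/eqP r_ij]; subst r.
- by rewrite r_tau in i_tau.
- by rewrite r_tau in j_tau.
Qed.

Lemma inter_eq_off_cone (tau S : {set R}) (i : R) (f : R -> rat) :
  (#|tau| + 2 = d)%N -> S \in cones -> is_relation f ->
  {in ~: S, inter tau i =1 f} -> inter tau i =1 f.
Proof. by move=> card_tau coneS; apply: relation_eq_off_cone coneS (inter_relation i card_tau). Qed.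

Lemma ch2_dotE (tau : {set R}) : ch2_dot deg tau = 2^-1 * \sum_i inter tau i i.
Proof.
congr (_ * _); apply: eq_bigr => i _; rewrite /inter; congr deg.
by apply/ffunP => r; rewrite !ffunE -addnn addnA.
Qed.

Lemma not_ch2_nef (tau : {set R}) :
  tau \in cones -> (#|tau| + 2 = d)%N -> \sum_i inter tau i i < 0 -> ~ ch2_nef d cones deg.
Proof.
move=> cone_tau card_tau sum_lt0 /(_ tau cone_tau); rewrite -card_tau addnK ch2_dotE => /(_ erefl).
by rewrite pmulr_rge0 ?invr_gt0 // leNgt sum_lt0.
Qed.

Variable prims : seq {set R}.
Hypothesis primsP : forall P, primitive_collection cones P <-> P \in prims.

Lemma noncone_of_primitive (P S : {set R}) : P \in prims -> P \subset S -> S \notin cones.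
Proof.
case: fan => _ face _ _ /primsP[ncone_P _] sub_PS.
by apply: contra ncone_P => coneS; apply: face coneS sub_PS.
Qed.

Lemma cone_of_no_primitive (S : {set R}) :
  (forall P, P \in prims -> ~~ (P \subset S)) -> S \in cones.
Proof.
elim: {S}_.+1 {-2}S (ltnSn #|S|) => // n IHn S card_S no_prim.
apply: contraT => ncone_S; suff /primsP prim_S : primitive_collection cones S.
  by have := no_prim S prim_S; rewrite subxx.
split=> // Q /[dup] /proper_card card_Q /proper_sub sub_QS.
apply: IHn; first exact: leq_trans card_Q card_S.
by move=> P /no_prim; apply: contra => /subset_trans; apply.
Qed.

End SurfaceIntersection.

Section FiveGroupFan.

Variables (p0 p1 p2 p3 p4 : nat) (b c : nat -> nat).
Hypotheses (hp0 : (0 < p0)%N) (hp1 : (0 < p1)%N) (hp2 : (0 < p2)%N).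
Hypotheses (hp3 : (0 < p3)%N) (hp4 : (0 < p4)%N).

Local Notation R := (ray p0 p1 p2 p3 p4).
Local Notation d := (dimN p0 p1 p2 p3 p4).
Local Notation G := (grp p0 p1 p2 p3 p4).

Variables (vec : R -> 'rV[int]_d) (cones : {set {set R}}) (deg : {ffun R -> nat} -> rat).
Hypothesis fan : is_fan vec cones.
Hypothesis primsP :
  forall P, primitive_collection cones P <-> P \in the_primitive_collections p0 p1 p2 p3 p4.
Hypothesis rels : primitive_relations b c vec.
Hypothesis deg_form : intersection_form vec cones deg.

Definition tg (r : R) : nat := tag r.

Lemma map_weighted_sum (A : {set R}) (n : R -> nat) :
  map_mx intr (\sum_(r in A) vec r *+ n r) = lcomb vec (fun r => ((r \in A) * n r)%:R).
Proof.
rewrite map_mx_sum big_mkcond; apply: eq_bigr => r _.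
by case: (r \in A); rewrite ?scale0r // raddfMn scaler_nat mul1n.
Qed.

Lemma map_gsum (k : 'I_5) : map_mx intr (gsum vec k) = lcomb vec (fun r => (r \in G k)%:R).
Proof.
rewrite /gsum (eq_bigr (fun r => vec r *+ 1)) // map_weighted_sum.
by apply: eq_lcomb => r; rewrite muln1.
Qed.

(* Coefficients of the primitive relations of [G 0 :|: G 1], [G 1 :|: G 2], [G 2 :|: G 3]. *)
Definition rho1 (r : R) : rat :=
  match tg r with
  | 0 | 1 => 1
  | 2 => if idx r == 0 then 0 else - (c (idx r))%:R
  | 3 => - (b (idx r) + 1)%:R
  | _ => 0
  end.
Definition rho2 (r : R) : rat := match tg r with 0 | 3 => 0 | 1 | 2 => 1 | _ => -1 end.
Definition rho3 (r : R) : rat := match tg r with 2 | 3 => 1 | _ => 0 end.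

Lemma relation_rho1 : is_relation vec rho1.
Proof.
case: rels => rel1 _ _ _ _.
have /(congr1 (map_mx (intr : int -> rat))) :
    gsum vec 0 + gsum vec 1 - (zterm c vec + tterm b 1 vec) = 0.
  by rewrite rel1 subrr.
rewrite map_mx0 map_mxB !map_mxD !map_gsum /zterm /tterm !map_weighted_sum -!lcombD -lcombB.
apply: eq_relation => -[[[|[|[|[|[|k]]]]] lt_k5] j] //=;
  rewrite !inE /= /rho1 /= ?(mul0n, mul1n, add0r, addr0, sub0r, subr0) //.
by case: (idx _ == 0%N); rewrite ?oppr0.
Qed.

Lemma relation_rho2 : is_relation vec rho2.
Proof.
case: rels => _ rel2 _ _ _.
have /(congr1 (map_mx (intr : int -> rat))) : gsum vec 1 + gsum vec 2 - gsum vec 4 = 0.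
  by rewrite rel2 subrr.
rewrite map_mx0 map_mxB map_mxD !map_gsum -lcombD -lcombB.
by apply: eq_relation => -[[[|[|[|[|[|k]]]]] lt_k5] j] //=; rewrite !inE /= /rho2 /=.
Qed.

Lemma relation_rho3 : is_relation vec rho3.
Proof.
case: rels => _ _ rel3 _ _.
have /(congr1 (map_mx (intr : int -> rat))) : gsum vec 2 + gsum vec 3 = 0 by [].
rewrite map_mx0 map_mxD !map_gsum -lcombD.
by apply: eq_relation => -[[[|[|[|[|[|k]]]]] lt_k5] j] //=; rewrite !inE /= /rho3 /=.
Qed.

Lemma relation_comb (l1 l2 l3 : rat) :
  is_relation vec (fun r => l1 * rho1 r + l2 * rho2 r + l3 * rho3 r).
Proof.
rewrite /is_relation /lcomb.
under eq_bigr do rewrite !scalerDl -!scalerA.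
rewrite !big_split -!scaler_sumr /=.
move: relation_rho1 relation_rho2 relation_rho3; rewrite /is_relation /lcomb => -> -> ->.
by rewrite !scaler0 !addr0.
Qed.

Definition ray_of (k : 'I_5) (j : 'I_(psz p0 p1 p2 p3 p4 k)) : R := Tagged _ j.

Definition v0 := @ray_of (@Ordinal 5 0 isT) (Ordinal hp0).
Definition y0 := @ray_of (@Ordinal 5 1 isT) (Ordinal hp1).
Definition z0 := @ray_of (@Ordinal 5 2 isT) (Ordinal hp2).
Definition t0 := @ray_of (@Ordinal 5 3 isT) (Ordinal hp3).
Definition u0 := @ray_of (@Ordinal 5 4 isT) (Ordinal hp4).

Lemma eq_ray_of (r : R) (k : 'I_5) (j : 'I_(psz p0 p1 p2 p3 p4 k)) :
  tag r = k -> idx r = j -> r = ray_of j.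
Proof. by case: r => k' j' /= eq_k; subst k => eq_j; congr Tagged; apply: val_inj. Qed.

Lemma idx_neq0 (r : R) : r != z0 -> tg r = 2%N -> idx r != 0%N.
Proof.
move=> neq_z0 tg_r; apply: contra neq_z0 => /eqP idx_r.
by apply/eqP; apply: (@eq_ray_of r (@Ordinal 5 2 isT) (Ordinal hp2) _ idx_r); apply: val_inj.
Qed.

Lemma card_rays : #|R| = (p0 + p1 + p2 + p3 + p4)%N.
Proof.
rewrite card_tagged sumnE big_map big_enum /=.
by rewrite !big_ord_recl big_ord0 /psz /= !card_ord !addnA addn0.
Qed.

Lemma card_compl (O : {set R}) : #|O| = 5 -> (#|~: O| + 2 = d)%N.
Proof. by move=> card_O; have := cardsC O; rewrite card_rays card_O /dimN; lia. Qed.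

Lemma cone_of_missing (S : {set R}) (x0 x1 x2 x3 x4 : R) :
  x0 \in G 0 :|: G 1 -> x1 \in G 1 :|: G 2 -> x2 \in G 2 :|: G 3 ->
  x3 \in G 3 :|: G 4 -> x4 \in G 4 :|: G 0 ->
  x0 \notin S -> x1 \notin S -> x2 \notin S -> x3 \notin S -> x4 \notin S -> S \in cones.
Proof.
move=> x0P x1P x2P x3P x4P x0S x1S x2S x3S x4S.
apply: (cone_of_no_primitive primsP) => P; rewrite !inE.
case/or4P => [|||/orP[]] /eqP->; apply/subsetPn;
  by [exists x0 | exists x1 | exists x2 | exists x3 | exists x4].
Qed.

Lemma noncone_compl (O : {set R}) (o o' : R) (k k' : 'I_5) :
  G k :|: G k' \in the_primitive_collections p0 p1 p2 p3 p4 ->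
  {in O, forall r, r \in G k :|: G k' -> r \in [set o; o']} -> ~: O :|: [set o; o'] \notin cones.
Proof.
move=> prim_kk' sub_oo'; apply: (noncone_of_primitive fan primsP prim_kk').
apply/subsetP => r r_kk'; rewrite in_setU in_setC.
by have [/sub_oo' -> // | ] := boolP (r \in O).
Qed.

Lemma inter_compl5_noncone (x1 x2 x3 x4 x5 o o' : R) (k k' : 'I_5) :
  #|[set x1; x2; x3; x4; x5]| = 5 ->
  G k :|: G k' \in the_primitive_collections p0 p1 p2 p3 p4 ->
  all (fun x => (x \in G k :|: G k') ==> (x \in [set o; o'])) [:: x1; x2; x3; x4; x5] ->
  inter deg (~: [set x1; x2; x3; x4; x5]) o o' = 0.
Proof.
move=> card_O prim /allP sub_oo'; apply: (inter_noncone deg_form (card_compl card_O)).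
apply: noncone_compl prim _; apply: set5_ind;
  by apply/implyP; apply: sub_oo'; rewrite !inE eqxx ?orbT.
Qed.

Lemma inter_compl_eq (O : {set R}) (o o' i : R) (f : R -> rat) :
  #|O| = 5 -> ~: O :|: [set o; o'] \in cones -> is_relation vec f ->
  {in O, forall r, r \notin [set o; o'] -> inter deg (~: O) i r = f r} -> inter deg (~: O) i =1 f.
Proof.
move=> card_O cone_oo' rel_f eq_f.
apply: (inter_eq_off_cone fan deg_form (card_compl card_O) cone_oo' rel_f).
by move=> r; rewrite in_setC in_setU in_setC negb_or negbK => /andP[rO r_oo']; apply: eq_f.
Qed.

Section PentagonSurface.

Definition O_P : {set R} := [set v0; y0; z0; t0; u0].

Lemma card_OP : #|O_P| = 5.
Proof. by rewrite /O_P -!setUA !cardsU1 cards1 !inE. Qed.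

Local Notation tauP := (~: O_P).

Lemma card_tauP : (#|tauP| + 2 = d)%N.
Proof. exact: card_compl card_OP. Qed.

Lemma cone_tauP_ty : tauP :|: [set t0; y0] \in cones.
Proof. by apply: (@cone_of_missing _ v0 z0 z0 u0 u0); rewrite !inE ?eqxx. Qed.

Lemma cone_tauP_vt : tauP :|: [set v0; t0] \in cones.
Proof. by apply: (@cone_of_missing _ y0 y0 z0 u0 u0); rewrite !inE ?eqxx. Qed.

Lemma cone_tauP_yu : tauP :|: [set y0; u0] \in cones.
Proof. by apply: (@cone_of_missing _ v0 z0 z0 t0 v0); rewrite !inE ?eqxx. Qed.

Lemma cone_tauP_uz : tauP :|: [set u0; z0] \in cones.
Proof. by apply: (@cone_of_missing _ v0 y0 t0 t0 v0); rewrite !inE ?eqxx. Qed.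

Lemma cone_tauP_vz : tauP :|: [set v0; z0] \in cones.
Proof. by apply: (@cone_of_missing _ y0 y0 t0 t0 u0); rewrite !inE ?eqxx. Qed.

Definition bilP (i r : R) : rat :=
  rho1 i * rho3 r + rho3 i * rho1 r - rho2 i * rho2 r + (b 0%N + 1)%:R * (rho3 i * rho3 r).

Lemma bilPC (i r : R) : bilP i r = bilP r i.
Proof. by rewrite /bilP; ring. Qed.

Lemma relation_bilP (i : R) : is_relation vec (bilP i).
Proof.
apply: eq_relation (relation_comb (rho3 i) (- rho2 i) (rho1 i + (b 0%N + 1)%:R * rho3 i)) => r.
by rewrite /bilP; ring.
Qed.

Lemma interP_y0 : inter deg tauP y0 =1 bilP y0.
Proof.
apply: inter_compl_eq card_OP cone_tauP_ty (relation_bilP y0) _.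
apply: set5_ind; rewrite !inE ?eqxx // => _; rewrite /bilP /rho1 /rho2 /rho3 /=.
- by rewrite (inter_compl5_noncone (k := 0) (k' := 1)) ?card_OP /= ?inE ?eqxx ?orbT //; ring.
- by rewrite (inter_compl5_noncone (k := 1) (k' := 2)) ?card_OP /= ?inE ?eqxx ?orbT //; ring.
- by rewrite (inter_cone deg_form card_tauP) ?cone_tauP_yu ?inE ?eqxx //; ring.
Qed.

Lemma interP_t0 : inter deg tauP t0 =1 bilP t0.
Proof.
apply: inter_compl_eq card_OP cone_tauP_vt (relation_bilP t0) _.
apply: set5_ind; rewrite !inE ?eqxx // => _; rewrite /bilP /rho1 /rho2 /rho3 /=.
- by rewrite (inter_cone deg_form card_tauP) ?cone_tauP_ty ?inE ?eqxx //; ring.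
- by rewrite (inter_compl5_noncone (k := 2) (k' := 3)) ?card_OP /= ?inE ?eqxx ?orbT //; ring.
- by rewrite (inter_compl5_noncone (k := 3) (k' := 4)) ?card_OP /= ?inE ?eqxx ?orbT //; ring.
Qed.

Lemma interP_u0 : inter deg tauP u0 =1 bilP u0.
Proof.
apply: inter_compl_eq card_OP cone_tauP_yu (relation_bilP u0) _.
apply: set5_ind; rewrite !inE ?eqxx // => _; rewrite /bilP /rho1 /rho2 /rho3 /=.
- by rewrite (inter_compl5_noncone (k := 4) (k' := 0)) ?card_OP /= ?inE ?eqxx ?orbT //; ring.
- by rewrite (inter_cone deg_form card_tauP) ?cone_tauP_uz ?inE ?eqxx //; ring.
- by rewrite (inter_compl5_noncone (k := 3) (k' := 4)) ?card_OP /= ?inE ?eqxx ?orbT //; ring.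
Qed.

Lemma interP (i : R) : inter deg tauP i =1 bilP i.
Proof.
apply: inter_compl_eq card_OP cone_tauP_vz (relation_bilP i) _.
apply: set5_ind; rewrite !inE ?eqxx // => _; rewrite interC bilPC.
- exact: interP_y0.
- exact: interP_t0.
- exact: interP_u0.
Qed.

Lemma bilP_diag_le0 (i : R) :
  (forall j, (j < p3)%N -> (b 0 <= b j)%N) -> (forall j, (1 <= j < p2)%N -> (b 0 <= 2 * c j)%N) ->
  i != z0 -> bilP i i <= 0.
Proof.
move=> b_min c_big /idx_neq0; rewrite /bilP /rho1 /rho2 /rho3.
case: i => -[[|[|[|[|[|k]]]]] lt_k] j //= idx_j; rewrite ?natrD.
- lra.
- lra.
- have /c_big : (1 <= j < p2)%N by rewrite lt0n idx_j // ltn_ord.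
  rewrite (negbTE (idx_j erefl)) -(ler_nat rat) natrM; lra.
- have := b_min j (ltn_ord j); rewrite -(ler_nat rat); have := ler0n rat (b j); lra.
- lra.
Qed.

Lemma cone_tauP : tauP \in cones.
Proof. by apply: (@cone_of_missing _ v0 y0 z0 t0 u0); rewrite !inE ?eqxx. Qed.

Lemma pentagon_not_nef :
  (forall j, (j < p3)%N -> (b 0 <= b j)%N) -> (forall j, (1 <= j < p2)%N -> (b 0 <= 2 * c j)%N) ->
  ~ ch2_nef d cones deg.
Proof.
move=> b_min c_big; apply: (not_ch2_nef cone_tauP card_tauP).
rewrite (eq_bigr _ (fun i _ => interP i i)).
apply: (@sumr_lt0_pair _ _ _ z0 t0) => // [|i neq_z0 _]; last exact: bilP_diag_le0.
by rewrite /bilP /rho1 /rho2 /rho3 /= natrD; lra.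
Qed.

End PentagonSurface.

Section QuadrilateralSurface.

Hypothesis lt1_p2 : (1 < p2)%N.

Definition z1 := @ray_of (@Ordinal 5 2 isT) (Ordinal lt1_p2).

Lemma eq_z0z1F : (z0 == z1) = false.
Proof. by apply/eqP => /(congr1 (@idx _ _ _ _ _)). Qed.

Lemma eq_z1z0F : (z1 == z0) = false.
Proof. by rewrite eq_sym eq_z0z1F. Qed.

Definition O_Q : {set R} := [set v0; y0; z0; z1; u0].

Lemma card_OQ : #|O_Q| = 5.
Proof. by rewrite /O_Q -!setUA !cardsU1 cards1 !inE eq_z0z1F. Qed.

Local Notation tauQ := (~: O_Q).

Lemma card_tauQ : (#|tauQ| + 2 = d)%N.
Proof. exact: card_compl card_OQ. Qed.

Lemma cone_tauQ : tauQ \in cones.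
Proof. by apply: (@cone_of_missing _ v0 y0 z0 u0 u0); rewrite !inE ?eqxx ?eq_z0z1F ?eq_z1z0F. Qed.

Lemma cone_tauQ_yz : tauQ :|: [set y0; z0] \in cones.
Proof. by apply: (@cone_of_missing _ v0 z1 z1 u0 u0); rewrite !inE ?eqxx ?eq_z0z1F ?eq_z1z0F. Qed.

Lemma cone_tauQ_vz1 : tauQ :|: [set v0; z1] \in cones.
Proof. by apply: (@cone_of_missing _ y0 z0 z0 u0 u0); rewrite !inE ?eqxx ?eq_z0z1F ?eq_z1z0F. Qed.

Lemma cone_tauQ_yz1 : tauQ :|: [set y0; z1] \in cones.
Proof. by apply: (@cone_of_missing _ v0 z0 z0 u0 u0); rewrite !inE ?eqxx ?eq_z0z1F ?eq_z1z0F. Qed.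

Lemma cone_tauQ_vz : tauQ :|: [set v0; z0] \in cones.
Proof. by apply: (@cone_of_missing _ y0 y0 z1 u0 u0); rewrite !inE ?eqxx ?eq_z0z1F ?eq_z1z0F. Qed.

Definition bilQ (i r : R) : rat :=
  rho1 i * rho3 r + rho3 i * rho1 r + (c 1%N)%:R * (rho3 i * rho3 r).

Lemma bilQC (i r : R) : bilQ i r = bilQ r i.
Proof. by rewrite /bilQ; ring. Qed.

Lemma relation_bilQ (i : R) : is_relation vec (bilQ i).
Proof.
apply: eq_relation (relation_comb (rho3 i) 0 (rho1 i + (c 1%N)%:R * rho3 i)) => r.
by rewrite /bilQ; ring.
Qed.

Lemma interQ_u0 (r : R) : inter deg tauQ u0 r = bilQ u0 r.
Proof.
rewrite /bilQ /rho1 /rho3 /= !mul0r addr0 mulr0.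
apply: (inter_noncone deg_form card_tauQ); apply: (@noncone_compl _ _ _ 3 4).
  by rewrite !inE eqxx ?orbT.
by apply: set5_ind; rewrite !inE ?eqxx.
Qed.

Lemma interQ_y0 : inter deg tauQ y0 =1 bilQ y0.
Proof.
apply: inter_compl_eq card_OQ cone_tauQ_yz (relation_bilQ y0) _.
apply: set5_ind; rewrite !inE ?eqxx ?eq_z0z1F ?eq_z1z0F // => _.
- rewrite (inter_compl5_noncone (k := 0) (k' := 1)) ?card_OQ /= ?inE ?eqxx ?orbT //.
  by rewrite /bilQ /rho1 /rho3 /=; ring.
- rewrite (inter_cone deg_form card_tauQ) ?cone_tauQ_yz1 ?inE ?eqxx ?eq_z0z1F ?eq_z1z0F //.
  by rewrite /bilQ /rho1 /rho3 /=; ring.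
- by rewrite interC interQ_u0 bilQC.
Qed.

Lemma interQ_z1 : inter deg tauQ z1 =1 bilQ z1.
Proof.
apply: inter_compl_eq card_OQ cone_tauQ_vz1 (relation_bilQ z1) _.
apply: set5_ind; rewrite !inE ?eqxx ?eq_z0z1F ?eq_z1z0F // => _.
- by rewrite interC interQ_y0 bilQC.
- rewrite (inter_compl5_noncone (k := 2) (k' := 3)) ?card_OQ /=
    ?inE ?eqxx ?eq_z0z1F ?eq_z1z0F ?orbT //.
  by rewrite /bilQ /rho1 /rho3 /=; ring.
- by rewrite interC interQ_u0 bilQC.
Qed.

Lemma interQ (i : R) : inter deg tauQ i =1 bilQ i.
Proof.
apply: inter_compl_eq card_OQ cone_tauQ_vz (relation_bilQ i) _.
apply: set5_ind; rewrite !inE ?eqxx ?eq_z0z1F ?eq_z1z0F // => _; rewrite interC bilQC.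
- exact: interQ_y0.
- exact: interQ_z1.
- exact: interQ_u0.
Qed.

Lemma bilQ_diag_le0 (i : R) :
  (forall j, (j < p3)%N -> (b 0 <= b j)%N) -> (forall j, (1 <= j < p2)%N -> (c 1 <= c j)%N) ->
  (2 * c 1 < b 0)%N -> i != z0 -> bilQ i i <= 0.
Proof.
have c1_ge0 := ler0n rat (c 1%N).
move=> b_min c_min; rewrite -(ltr_nat rat) natrM => c1_small /idx_neq0.
rewrite /bilQ /rho1 /rho2 /rho3.
case: i => -[[|[|[|[|[|k]]]]] lt_k] j //= idx_j; rewrite ?natrD.
- lra.
- lra.
- have /c_min : (1 <= j < p2)%N by rewrite lt0n idx_j // ltn_ord.
  rewrite (negbTE (idx_j erefl)) -(ler_nat rat); have := ler0n rat (c j); lra.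
- have := b_min j (ltn_ord j); rewrite -(ler_nat rat); lra.
- lra.
Qed.

Lemma quadrilateral_not_nef :
  (forall j, (j < p3)%N -> (b 0 <= b j)%N) -> (forall j, (1 <= j < p2)%N -> (c 1 <= c j)%N) ->
  (2 * c 1 < b 0)%N -> ~ ch2_nef d cones deg.
Proof.
move=> b_min c_min c1_small; apply: (not_ch2_nef cone_tauQ card_tauQ).
rewrite (eq_bigr _ (fun i _ => interQ i i)).
apply: (@sumr_lt0_pair _ _ _ z0 t0) => // [|i neq_z0 _]; last exact: bilQ_diag_le0.
move: c1_small; rewrite -(ltr_nat rat) natrM /bilQ /rho1 /rho2 /rho3 /= natrD.
have := ler0n rat (c 1%N); lra.
Qed.

End QuadrilateralSurface.

End FiveGroupFan.

Local Close Scope ring_scope.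
Unset Implicit Arguments.

Theorem lemma3p4 (p0 p1 p2 p3 p4 : nat)
  (hp0 : (0 < p0)%N) (hp1 : (0 < p1)%N) (hp2 : (0 < p2)%N) (hp3 : (0 < p3)%N) (hp4 : (0 < p4)%N)
  (b c : nat -> nat)
  (hbmin : forall i, (i < p3)%N -> (b 0 <= b i)%N)
  (hcmin : forall j, (1 <= j < p2)%N -> (c 1 <= c j)%N)
  (vec : ray p0 p1 p2 p3 p4 -> 'rV[int]_(dimN p0 p1 p2 p3 p4))
  (cones : {set {set ray p0 p1 p2 p3 p4}})
  (Hfan : smooth_projective_complete_fan vec cones)
  (Hprim : forall P, primitive_collection cones P <-> P \in the_primitive_collections p0 p1 p2 p3 p4)
  (Hrel : primitive_relations b c vec)
  (deg : {ffun ray p0 p1 p2 p3 p4 -> nat} -> rat)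
  (Hdeg : intersection_form vec cones deg)
  (Hnef : ch2_nef (dimN p0 p1 p2 p3 p4) cones deg) :
  p3 = 1%N.
Proof.
exfalso; case: Hfan => fan _ _ _.
have pentagon := pentagon_not_nef hp0 hp1 hp2 hp3 hp4 fan Hprim Hrel Hdeg hbmin.
have [b0_small | c1_small] := leqP (b 0) (2 * c 1).
  by apply: pentagon Hnef => j /hcmin; lia.
have [p2_le1 | p2_gt1] := leqP p2 1.
  by apply: pentagon Hnef => j; lia.
by apply: (quadrilateral_not_nef hp0 hp1 hp2 hp3 hp4 fan Hprim Hrel Hdeg p2_gt1 hbmin hcmin
  c1_small).
Qed.
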